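(* Let $p\ne q$ be primes, $G=\mathbb{Z}_p^2\times\mathbb{Z}_q^2$, and $S\subseteq G$. Assume that for every nonzero $u\in\mathbb{Z}_p^2$ there is $x_u\in\mathbb{Z}_q^2$ with $\chi_{u+x_u}(S)=0$. Then there exist a nonnegative integer $c$ and a multiset $D\colon\mathbb{Z}_p^2\to\mathbb{N}$ such that $S_p=c\,1_{\mathbb{Z}_p^2}+qD$.
   Context: Elements of $G$ are written $a+b$ with $a\in\mathbb{Z}_p^2$, $b\in\mathbb{Z}_q^2$. For $w=u+v$ define $\chi_w(a+b)=\exp\big(2\pi i(\tfrac{u\cdot a}{p}+\tfrac{v\cdot b}{q})\big)$ and $\chi(S)=\sum_{s\in S}\chi(s)$. $S_p$ is the projection of $S$ to $\mathbb{Z}_p^2$ as a multiset: $S_p(a)=\#\{b\in\mathbb{Z}_q^2:a+b\in S\}$. *)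

From mathcomp Require Import all_boot all_algebra complex.
From mathcomp Require Import all_classical all_reals all_analysis.
Set Implicit Arguments. Unset Strict Implicit. Unset Printing Implicit Defensive.
Import GRing.Theory Num.Theory.
Local Open Scope ring_scope.

(* Z_n^2 (n prime in our use, so 'Z_n = 'I_n) *)
Definition Z2 (n : nat) := ('Z_n * 'Z_n)%type.

Definition dot2 (n : nat) (u a : Z2 n) : nat :=
  (nat_of_ord u.1 * nat_of_ord a.1 + nat_of_ord u.2 * nat_of_ord a.2)%N.

(* G = Z_p^2 x Z_q^2 ; an element a + b is the pair (a, b) *)
Definition G (p q : nat) := (Z2 p * Z2 q)%type.

Definition expi (R : realType) (t : R) : R[i] := (cos t +i* sin t)%C.

Definition chi (R : realType) (p q : nat) (w s : G p q) : R[i] :=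
  expi (2 * pi * ((dot2 w.1 s.1)%:R / p%:R + (dot2 w.2 s.2)%:R / q%:R)).

Definition chiS (R : realType) (p q : nat) (w : G p q) (S : {set G p q}) : R[i] :=
  \sum_(s in S) chi R w s.

Definition Sp (p q : nat) (S : {set G p q}) (a : Z2 p) : nat :=
  #|[set b : Z2 q | (a, b) \in S]|.

From mathcomp Require Import all_boot all_algebra complex.
From mathcomp Require Import all_classical all_reals all_analysis.
From mathcomp Require Import algC cyclotomic.
From mathcomp Require Import ring lra zify.
Set Implicit Arguments. Unset Strict Implicit. Unset Printing Implicit Defensive.
Import GRing.Theory Num.Theory.
Local Open Scope ring_scope.

(* For u <> 0 choose x_u with chi_(u + x_u)(S) = 0.  With zeta = exp(2 pi i / pq)
   we have chi_(u + x_u)(a + b) = zeta ^ e(a + b), where e(a + b) = q (u.a) + p (x_u.b),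
   so zeta is a root of P = sum_(s in S) X ^ e(s) and Phi_pq divides P in Z[X].
   Modulo q, Phi_pq = Phi_p ^ (q - 1) with Phi_p = 1 + X + ... + X ^ (p - 1), so
   P = Phi_p H in F_q[X], and the coefficients of P summed over any residue class
   of exponents mod p give H(1).  As e(a + b) = q (u.a) mod p, these class sums are
   the S_p-masses of the lines u.a = t, which are therefore all congruent mod q.
   Every point other than a lies on exactly one of the p + 1 lines through a, so
   counting over those lines shows that S_p is constant mod q. *)

Lemma prod_Cyclotomic_seq n (s : seq nat) : (0 < n)%N -> uniq s ->
  (forall d, (d \in s) = (d %| n)%N) -> \prod_(d <- s) 'Phi_d = 'X^n - 1.
Proof.
move=> n_gt0 s_uniq s_div; rewrite -(prod_Cyclotomic n_gt0); apply: perm_big.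
apply: uniq_perm => [//|//|d]; first exact: divisors_uniq.
by rewrite s_div dvdn_divisors.
Qed.

Lemma dvdn_prime p d : prime p -> (d %| p)%N = (d \in [:: 1%N; p]).
Proof.
move=> p_pr; rewrite !inE; apply/idP/orP => [|[] /eqP->]; rewrite ?dvd1n ?dvdnn //.
by case/primeP: p_pr => _ p_div /p_div/orP.
Qed.

Lemma dvdn_prime_mul p q d : prime p -> prime q ->
  (d %| p * q)%N = (d \in [:: 1%N; p; q; (p * q)%N]).
Proof.
move=> p_pr q_pr; rewrite !inE; apply/idP/idP => [|]; last first.
  case/or4P => /eqP->; first exact: dvd1n; last exact: dvdnn.
    exact: dvdn_mulr (dvdnn p).
  exact: dvdn_mull (dvdnn q).
have [/dvdnP[k ->]|p_ndvd] := boolP (p %| d)%N.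
  rewrite mulnC dvdn_pmul2l ?prime_gt0 // dvdn_prime // !inE.
  by case/orP=> /eqP->; rewrite ?muln1 ?eqxx ?orbT.
rewrite Gauss_dvdr; last by rewrite coprime_sym prime_coprime.
by rewrite dvdn_prime // !inE => /orP[]/eqP->; rewrite eqxx ?orbT.
Qed.

Lemma Cyclotomic1 : 'Phi_1 = 'X - 1.
Proof.
have := @prod_Cyclotomic_seq 1 [:: 1%N] isT isT.
by rewrite big_seq1 expr1; apply=> d; rewrite inE dvdn1.
Qed.

Lemma Cyclotomic1_mul_prime p : prime p -> 'Phi_1 * 'Phi_p = 'X^p - 1.
Proof.
move=> p_pr; have <- : \prod_(d <- [:: 1%N; p]) 'Phi_d = 'Phi_1 * 'Phi_p.
  by rewrite big_cons big_seq1.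
apply: prod_Cyclotomic_seq => [|/=|d]; first exact: prime_gt0.
  by rewrite inE andbT neq_ltn (prime_gt1 p_pr).
by rewrite dvdn_prime.
Qed.

Lemma Cyclotomic_prime p : prime p -> 'Phi_p = \sum_(i < p) 'X^i.
Proof.
move=> p_pr; apply: (@mulfI _ 'Phi_1); first by rewrite Cyclotomic1 -polyC1 polyXsubC_eq0.
by rewrite Cyclotomic1_mul_prime // Cyclotomic1 subrX1.
Qed.

Lemma Cyclotomic_prime_mul p q : prime p -> prime q -> p != q ->
  'Phi_p * 'Phi_(p * q) = \sum_(i < p) 'X^(i * q).
Proof.
move=> p_pr q_pr pq_neq.
have pq_gt0 : (0 < p * q)%N by rewrite muln_gt0 !prime_gt0.
have divs_uniq : uniq [:: 1%N; p; q; (p * q)%N].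
  have [p_gt1 q_gt1] := (prime_gt1 p_pr, prime_gt1 q_pr).
  rewrite /= !inE !negb_or -!andbA pq_neq andbT.
  by repeat (apply/andP; split); apply/eqP; nia.
have divsE d := esym (dvdn_prime_mul d p_pr q_pr).
apply: (@mulfI _ ('Phi_1 * 'Phi_q)).
  by rewrite mulf_neq0 // monic_neq0 // Cyclotomic_monic.
rewrite Cyclotomic1_mul_prime //; under eq_bigr => i _ do rewrite mulnC exprM.
rewrite -subrX1 -exprM (mulnC q) -(prod_Cyclotomic_seq pq_gt0 divs_uniq divsE).
rewrite !big_cons big_nil mulr1 !mulrA -Cyclotomic1_mul_prime //.
by rewrite (mulrAC _ 'Phi_q).
Qed.

Lemma root_Cyclotomic (F : idomainType) n (z : F) :
  n.-primitive_root z -> root (map_poly intr 'Phi_n) z.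
Proof.
move=> z_prim; have n_gt0 := prim_order_gt0 z_prim.
have : root (map_poly (intr : int -> F) ('X^n - 1)) z.
  by rewrite rmorphB rmorph1 /= map_polyXn rootE !hornerE prim_expr_order // subrr.
rewrite -(prod_Cyclotomic n_gt0) rmorph_prod rootE horner_prod prodf_seq_eq0.
case/hasP => d; rewrite -dvdn_divisors // => d_dvd_n /= d_root.
suff /eqP <- : d == n by [].
rewrite eqn_dvd d_dvd_n (prim_order_dvd z_prim); apply/eqP.
have d_gt0 : (0 < d)%N := dvdn_gt0 n_gt0 d_dvd_n.
have : root (map_poly (intr : int -> F) ('X^d - 1)) z.
  rewrite -(prod_Cyclotomic d_gt0) (big_rem d) ?divisors_id // rmorphM rootM.
  by rewrite rootE d_root.
by rewrite rmorphB rmorph1 /= map_polyXn rootE !hornerE subr_eq0 => /eqP.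
Qed.

Lemma map_ratr_intr (F : numFieldType) (A : {poly int}) :
  map_poly (ratr : rat -> F) (map_poly intr A) = map_poly intr A.
Proof. by rewrite -map_poly_comp; apply: eq_map_poly => a /=; rewrite ratr_int. Qed.

Lemma Cyclotomic_minpoly n (z : algC) (A : {poly rat}) : n.-primitive_root z ->
  root (map_poly ratr A) z = (map_poly intr 'Phi_n %| A).
Proof.
move=> z_prim; have [m [m_minC _] minP] := minCpolyP z; rewrite minP.
suff -> : m = map_poly intr 'Phi_n by [].
apply: (@map_inj_poly _ _ (ratr : rat -> algC)); [exact: fmorph_inj|exact: rmorph0|].
by rewrite map_ratr_intr (Cintr_Cyclotomic z_prim) -minCpoly_cyclotomic // m_minC.
Qed.

Lemma Cyclotomic_dvd (F : numFieldType) n (z : F) (P : {poly int}) :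
  n.-primitive_root z -> root (map_poly intr P) z -> 'Phi_n %| P.
Proof.
move=> z_prim P_root; rewrite -dvdp_rat_int.
set PhiQ := map_poly intr 'Phi_n; set g := gcdp (map_poly intr P) PhiQ.
have PhiQ_neq0 : PhiQ != 0.
  by rewrite -size_poly_eq0 size_rat_int_poly size_poly_eq0 monic_neq0 ?Cyclotomic_monic.
have g_root : root (map_poly (ratr : rat -> F) g) z.
  by rewrite gcdp_map root_gcd !map_ratr_intr P_root root_Cyclotomic.
have g_size : size (map_poly (ratr : rat -> algC) g) != 1%N.
  rewrite size_map_poly -(size_map_poly (ratr : {rmorphism rat -> F})).
  rewrite gtn_eqF // (root_size_gt1 _ g_root) // map_poly_eq0.
  by rewrite gcdp_eq0 negb_and PhiQ_neq0 orbT.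
(* Phi_n is known to be minimal only for the primitive roots in algC, so move z
   to a complex algebraic root zc of gcd(P, Phi_n). *)
have /closed_rootP[zc zc_root] := g_size.
have zc_prim : n.-primitive_root zc.
  have [z0 z0_prim] := C_prim_root_exists (prim_order_gt0 z_prim).
  rewrite -(root_cyclotomic z0_prim) -(Cintr_Cyclotomic z0_prim) -map_ratr_intr.
  by apply: root_dvdp zc_root; rewrite dvdp_map dvdp_gcdr.
rewrite -(Cyclotomic_minpoly _ zc_prim).
by apply: root_dvdp zc_root; rewrite dvdp_map dvdp_gcdl.
Qed.

Lemma map_Cyclotomic_prime_mul p q : prime p -> prime q -> p != q ->
  map_poly (intr : int -> 'F_q) 'Phi_(p * q) = (\sum_(i < p) 'X^i) ^+ q.-1.
Proof.
move=> p_pr q_pr pq_neq; set J : {poly 'F_q} := \sum_(i < p) 'X^i.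
have J_Phi : map_poly intr 'Phi_p = J.
  by rewrite Cyclotomic_prime // rmorph_sum; apply: eq_bigr => i _ /=; rewrite map_polyXn.
have J_neq0 : J != 0 by rewrite -J_Phi monic_neq0 // monic_map // Cyclotomic_monic.
apply: (mulfI J_neq0); rewrite -exprS prednK ?prime_gt0 //.
have qFrob : q \in [pchar {poly 'F_q}] by rewrite pchar_poly pchar_Fp.
rewrite -J_Phi -rmorphM Cyclotomic_prime_mul // J_Phi -(pFrobenius_autE qFrob).
rewrite !rmorph_sum; apply: eq_bigr => i _ /=.
by rewrite map_polyXn pFrobenius_autE -exprM.
Qed.

Section ClassSums.
Variables (K : nzRingType) (p N : nat).

Definition class_sum (r : nat) (F : {poly K}) : K := \sum_(i < N | (i %% p)%N == r) F`_i.

Lemma class_sumB r (F1 F2 : {poly K}) :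
  class_sum r (F1 - F2) = class_sum r F1 - class_sum r F2.
Proof. by rewrite /class_sum -sumrB; apply: eq_bigr => i _; rewrite coefB. Qed.

Lemma class_sumZ r c (F : {poly K}) : class_sum r (c *: F) = c * class_sum r F.
Proof. by rewrite /class_sum mulr_sumr; apply: eq_bigr => i _; rewrite coefZ. Qed.

Lemma class_sum_widen M r (F : {poly K}) : (size F <= M)%N -> (M <= N)%N ->
  class_sum r F = \sum_(i < M | (i %% p)%N == r) F`_i.
Proof.
move=> F_size M_le_N; rewrite /class_sum -(subnKC M_le_N) big_split_ord /=.
rewrite [X in _ + X]big1 ?addr0 // => i _.
by rewrite nth_default // (leq_trans F_size) ?leq_addr.
Qed.

Lemma class_sum_mulXn r (F : {poly K}) : (size F + p <= N)%N ->
  class_sum r (F * 'X^p) = class_sum r F.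
Proof.
move=> F_size; have p_le_N : (p <= N)%N by rewrite (leq_trans _ F_size) ?leq_addl.
rewrite (@class_sum_widen (N - p)%N r F) ?leq_subr //; last by rewrite leq_subRL // addnC.
rewrite /class_sum; move: (N - p)%N (subnKC p_le_N) => M <-.
rewrite big_split_ord /= big1 ?add0r => [|i _]; last by rewrite coefMXn ltn_ord.
by apply: eq_big => [i|i _]; rewrite ?modnDl // coefMXn ltnNge leq_addr addKn.
Qed.

Lemma size_sumXn_leq : (size (\sum_(i < p) 'X^i : {poly K})%R <= p)%N.
Proof.
by apply: (leq_trans (size_sum _ _ _)); apply/bigmax_leqP => i _; rewrite size_polyXn.
Qed.

Lemma class_sum_sumXn r : (r < p)%N -> (p <= N)%N ->
  class_sum r (\sum_(i < p) 'X^i) = 1.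
Proof.
move=> r_lt_p p_le_N; rewrite (@class_sum_widen p) ?size_sumXn_leq //.
rewrite (big_pred1 (Ordinal r_lt_p)) => [|i]; last first.
  by rewrite modn_small //; apply/eqP/eqP => [ri|/(congr1 val)//]; exact: val_inj.
rewrite coef_sum (bigD1 (Ordinal r_lt_p)) //= coefXn eqxx big1 ?addr0 // => i.
by rewrite coefXn -val_eqE /= eq_sym => /negbTE->.
Qed.

End ClassSums.

Lemma class_sum_mulXsub1 (K : idomainType) (p N r : nat) (F : {poly K}) :
  (0 < p)%N -> (size (F * ('X^p - 1))%R <= N)%N ->
  class_sum p N r (F * ('X^p - 1)) = 0.
Proof.
move=> p_gt0 FX_size; have [->|F_neq0] := eqVneq F 0.
  by rewrite mul0r /class_sum big1 // => i; rewrite coef0.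
have X_neq0 : ('X^p - 1 : {poly K}) != 0 by rewrite -size_poly_eq0 size_XnsubC.
have F_size : (size F + p <= N)%N.
  by move: FX_size; rewrite size_mul // size_XnsubC // addnS.
by rewrite mulrBr mulr1 class_sumB class_sum_mulXn // subrr.
Qed.

Lemma class_sum_sumXn_mul (K : fieldType) (p N r : nat) (H : {poly K}) : (r < p)%N ->
  (size ((\sum_(i < p) 'X^i) * H)%R + p <= N)%N ->
  class_sum p N r ((\sum_(i < p) 'X^i) * H) = H.[1].
Proof.
move=> r_lt_p JH_size; set J := \sum_(i < p) 'X^i.
have p_le_N : (p <= N)%N by rewrite (leq_trans _ JH_size) ?leq_addl.
have [W HW] : exists W, H - H.[1]%:P = W * ('X - 1).
  by apply/factor_theorem; rewrite rootE !hornerE subrr.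
have JH_split : J * H - H.[1] *: J = W * ('X^p - 1).
  by rewrite -mul_polyC [_%:P * J]mulrC -mulrBr HW subrX1 -/J mulrC -mulrA.
have W_size : (size (W * ('X^p - 1))%R <= N)%N.
  rewrite -JH_split (leq_trans (size_polyD _ _)) // geq_max size_polyN.
  rewrite (leq_trans _ JH_size) ?leq_addr //=.
  by rewrite (leq_trans (size_scale_leq _ _)) // (leq_trans (size_sumXn_leq _ _)).
have := class_sum_mulXsub1 r (leq_ltn_trans (leq0n r) r_lt_p) W_size.
rewrite -JH_split class_sumB class_sumZ class_sum_sumXn // mulr1.
by move/eqP; rewrite subr_eq0 => /eqP.
Qed.

Lemma size_map_poly_leq (aR rR : nzRingType) (f : aR -> rR) (P : {poly aR}) :
  (size (map_poly f P) <= size P)%N.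
Proof. exact: size_poly. Qed.

Lemma class_sum_Cyclotomic_dvd p q (P : {poly int}) :
  prime p -> prime q -> p != q -> 'Phi_(p * q) %| P ->
  exists c : 'F_q, forall N r, (r < p)%N -> (size P + p <= N)%N ->
    class_sum p N r (map_poly intr P) = c.
Proof.
move=> p_pr q_pr pq_neq /dvdpP_int[Q].
rewrite zprimitive_monic ?Cyclotomic_monic // => ->.
set J : {poly 'F_q} := \sum_(i < p) 'X^i; set H := J ^+ q.-2 * map_poly intr Q.
have PE : map_poly intr ('Phi_(p * q) * Q) = J * H.
  rewrite rmorphM /= map_Cyclotomic_prime_mul // /H mulrA -exprS.
  by rewrite prednK // -subn1 subn_gt0 prime_gt1.
exists H.[1] => N r r_lt_p P_size; rewrite PE class_sum_sumXn_mul //.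
by rewrite -PE (leq_trans _ P_size) // leq_add2r size_map_poly_leq.
Qed.

Lemma class_sum_sum_Xn (K : nzRingType) (T : finType) (A : {pred T}) (e : T -> nat)
    p N r :
  (forall s, s \in A -> (e s < N)%N) ->
  class_sum p N r (\sum_(s in A) 'X^(e s) : {poly K})
    = \sum_(s in A | (e s %% p)%N == r) 1.
Proof.
move=> e_lt_N; rewrite /class_sum.
under eq_bigr => i _ do rewrite coef_sum.
rewrite exchange_big /= big_mkcondr /=; apply: eq_bigr => s s_A.
rewrite big_mkcond (bigD1 (Ordinal (e_lt_N s s_A))) //= coefXn eqxx big1 ?addr0 // => i.
by rewrite coefXn -val_eqE /= => /negbTE->; case: ifP.
Qed.

Section Expi.
Variable R : realType.

Lemma expiD (a b : R) : expi (a + b) = expi a * expi b.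
Proof. by rewrite /expi cosD sinD [RHS]/GRing.mul /= [_ * sin b + _]addrC. Qed.

Lemma expiMn n (t : R) : expi (n%:R * t) = expi t ^+ n.
Proof.
elim: n => [|n IHn]; first by rewrite mul0r expr0 /expi cos0 sin0.
by rewrite -addn1 natrD mulrDl mul1r expiD IHn addn1 exprSr.
Qed.

Lemma expi2pi : expi (2 * pi : R) = 1.
Proof. by rewrite /expi mulr_natl cos2pi sin2pi. Qed.

Lemma expi_neq1 (t : R) : 0 < t < 2 * pi -> expi t != 1.
Proof.
case/andP=> t_gt0 t_lt2pi; apply/negP => /eqP/(congr1 (@complex.Re R)) /= cos_t.
have sin_gt0 : 0 < sin (t / 2) by apply: sin_gt0_pi; rewrite divr_gt0 //= ltr_pdivrMr //; lra.
have := cos2Dsin2 (t / 2); move: cos_t; rewrite [t in cos t]splitr cosD -!expr2.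
by nra.
Qed.

Lemma expi_prim_root n : (0 < n)%N -> n.-primitive_root (expi (2 * pi / n%:R : R)).
Proof.
move=> n_gt0; have n_neq0 : n%:R != 0 :> R by rewrite pnatr_eq0 -lt0n.
have [m m_prim m_dvd_n] : {m | m.-primitive_root (expi (2 * pi / n%:R : R)) & (m %| n)%N}.
  by apply: prim_order_exists => //; rewrite -expiMn mulrC divfK // expi2pi.
have m_gt0 := prim_order_gt0 m_prim.
suff m_eq_n : m = n by move: m_prim; rewrite m_eq_n.
apply/eqP; rewrite eqn_leq dvdn_leq //=; apply: contraT; rewrite -ltnNge => m_lt_n.
have : 0 < m%:R * (2 * (pi : R) / n%:R) < 2 * pi.
  have two_pi_gt0 : 0 < 2 * (pi : R) by rewrite mulr_gt0 ?pi_gt0.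
  rewrite mulrCA pmulr_rgt0 // gtr_pMr // divr_gt0 ?ltr0n //=.
  by rewrite ltr_pdivrMr ?ltr0n // mul1r ltr_nat.
by move/expi_neq1; rewrite expiMn prim_expr_order ?eqxx.
Qed.

End Expi.

Section LineSums.
Variable p : nat.
Hypothesis p_pr : prime p.

Definition dotZp (u a : Z2 p) : 'Z_p := u.1 * a.1 + u.2 * a.2.

Lemma card_Zp_prime : #|{: 'Z_p}| = p.
Proof. by rewrite card_ord Zp_cast ?prime_gt1. Qed.

Lemma ltn_Zp_prime (x : 'Z_p) : (x < p)%N.
Proof. by rewrite -[X in (_ < X)%N]card_Zp_prime card_ord. Qed.

Lemma Zp_unit (x : 'Z_p) : x != 0 -> x \is a GRing.unit.
Proof.
move=> x_neq0; rewrite -(natr_Zp x) unitZpE ?prime_gt1 // prime_coprime //.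
have x_gt0 : (0 < x)%N by rewrite lt0n; apply: contra x_neq0 => /eqP x0; exact/eqP/val_inj.
by rewrite gtnNdvd // ltn_Zp_prime.
Qed.

Variable K : fieldType.

Lemma sum_mulr_eq_const (d c : 'Z_p) : d \is a GRing.unit ->
  \sum_(m : 'Z_p) ((m * d == c)%:R : K) = 1.
Proof.
move=> d_unit; rewrite (bigD1 (c / d)) //= divrK // eqxx big1 ?addr0 // => m.
move=> m_neq; case: eqP => // md_c.
by rewrite -md_c mulrK // eqxx in m_neq.
Qed.

Lemma sum_lines_through (x y : Z2 p) :
  \sum_(m : 'Z_p) ((dotZp (1, m) x == dotZp (1, m) y)%:R : K)
    + (dotZp (0, 1) x == dotZp (0, 1) y)%:R = 1 + p%:R * (x == y)%:R.
Proof.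
case: x y => [x1 x2] [y1 y2]; rewrite /dotZp /= !mul0r !mul1r !add0r xpair_eqE.
have [<-|x2_neq_y2] := eqVneq x2 y2.
  under eq_bigr => m _ do rewrite (inj_eq (addIr _)).
  by rewrite andbT sumr_const card_Zp_prime mulr_natl addrC.
rewrite andbF mulr0 !addr0 -[RHS](@sum_mulr_eq_const (x2 - y2) (y1 - x1)); last first.
  by rewrite Zp_unit // subr_eq0.
apply: eq_bigr => m _.
suff -> : (x1 + m * x2 == y1 + m * y2) = (m * (x2 - y2) == y1 - x1) by [].
apply/eqP/eqP => E; first by rewrite mulrBr -[y1](addrK (m * y2)) -E; ring.
by rewrite -[y1](subrK x1) -E; ring.
Qed.

Lemma line_sums_const (f : Z2 p -> K) : p%:R != 0 :> K ->
  (forall u : Z2 p, u != (0, 0) ->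
     exists c, forall t : 'Z_p, \sum_(a | dotZp u a == t) f a = c) ->
  forall a b, f a = f b.
Proof.
move=> p_neq0 line_sums; set T := \sum_a f a.
have line_sumE u : u != (0, 0) -> forall t, \sum_(a | dotZp u a == t) f a = T / p%:R.
  move=> /line_sums[c line_c] t; rewrite line_c; apply: (mulfI p_neq0).
  rewrite [RHS]mulrC divfK // /T (partition_big (dotZp u) predT) //=.
  by rewrite (eq_bigr (fun _ => c)) // sumr_const card_Zp_prime mulr_natl.
have dir_neq0 (m : 'Z_p) : ((1, m) : Z2 p) != (0, 0).
  by rewrite xpair_eqE negb_and oner_neq0.
have dir'_neq0 : ((0, 1) : Z2 p) != (0, 0).
  by rewrite xpair_eqE negb_and oner_neq0 orbT.
have count_lines a : T + p%:R * f a = (p%:R + 1) * (T / p%:R).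
  transitivity (\sum_(m : 'Z_p) \sum_(a' | dotZp (1, m) a' == dotZp (1, m) a) f a'
                + \sum_(a' | dotZp (0, 1) a' == dotZp (0, 1) a) f a'); last first.
    under eq_bigr => m _ do rewrite line_sumE //.
    by rewrite line_sumE // sumr_const card_Zp_prime mulrDl mul1r mulr_natl.
  have sum_cond (P : pred (Z2 p)) : \sum_(a' | P a') f a' = \sum_a' (P a')%:R * f a'.
    by rewrite big_mkcond; apply: eq_bigr => a' _; rewrite mulr_natl mulrb.
  under eq_bigr => m _ do rewrite sum_cond.
  rewrite sum_cond exchange_big -big_split /=.
  under eq_bigr => a' _ do rewrite -mulr_suml -mulrDl sum_lines_through mulrDl mul1r -mulrA.
  by rewrite big_split /= -mulr_sumr -sum_cond big_pred1_eq.
by move=> a b; apply: (mulfI p_neq0); apply: (addrI T); rewrite !count_lines.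
Qed.

End LineSums.

Definition chi_exp p q (w s : G p q) : nat := q * dot2 w.1 s.1 + p * dot2 w.2 s.2.

Lemma chi_expi (R : realType) p q (w s : G p q) : (0 < p)%N -> (0 < q)%N ->
  chi R w s = expi (2 * pi / (p * q)%:R) ^+ chi_exp w s.
Proof.
move=> p_gt0 q_gt0; have p_neq0 : p%:R != 0 :> R by rewrite pnatr_eq0 -lt0n.
have q_neq0 : q%:R != 0 :> R by rewrite pnatr_eq0 -lt0n.
rewrite -expiMn /chi /chi_exp /dot2; congr expi.
by rewrite !natrD !natrM; field; rewrite p_neq0 q_neq0.
Qed.

Lemma natr_dot2 p (u a : Z2 p) : (dot2 u a)%:R = dotZp u a.
Proof. by rewrite /dot2 natrD !natrM !natr_Zp. Qed.

Lemma sum_Sp (K : nzRingType) p q (S : {set G p q}) (P : pred (Z2 p)) :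
  \sum_(s in S | P s.1) (1 : K) = \sum_(a | P a) (Sp S a)%:R.
Proof.
transitivity (\sum_a \sum_b (if ((a, b) \in S) && P a then 1 else 0 : K)).
  by rewrite pair_bigA big_mkcond; apply: eq_bigr => -[a b].
rewrite [RHS]big_mkcond; apply: eq_bigr => a _.
case: (P a); last by rewrite big1 // => b; rewrite andbF.
rewrite /Sp -sum1_card natr_sum [RHS]big_mkcond.
by apply: eq_bigr => b _; rewrite inE andbT.
Qed.

Lemma class_sum_chi_exp (K : nzRingType) p q (S : {set G p q}) (w : G p q) N (t : 'Z_p) :
  prime p -> prime q -> p != q -> (forall s, s \in S -> (chi_exp w s < N)%N) ->
  class_sum p N (q%:R * t)%R (\sum_(s in S) 'X^(chi_exp w s) : {poly K})
    = \sum_(a | dotZp w.1 a == t) (Sp S a)%:R.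
Proof.
move=> p_pr q_pr pq_neq e_lt_N; rewrite class_sum_sum_Xn // -sum_Sp.
apply: eq_bigl => s; congr (_ && _).
have q_unit : (q%:R : 'Z_p) \is a GRing.unit.
  by rewrite unitZpE ?prime_gt1 // prime_coprime // dvdn_prime2.
rewrite /chi_exp addnC mulnC modnMDl -(val_Zp_nat (prime_gt1 p_pr)) val_eqE.
by rewrite natrM natr_dot2 (inj_eq (mulrI q_unit)).
Qed.

Lemma line_sums_Sp (R : realType) p q (S : {set G p q}) (u : Z2 p) (x : Z2 q) :
  prime p -> prime q -> p != q -> chiS R (u, x) S = 0 ->
  exists c : 'F_q, forall t, \sum_(a | dotZp u a == t) (Sp S a)%:R = c.
Proof.
move=> p_pr q_pr pq_neq chiS_ux.
pose P : {poly int} := \sum_(s in S) 'X^(chi_exp (u, x) s).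
have P_root : root (map_poly intr P) (expi (2 * pi / (p * q)%:R) : R[i]).
  rewrite rootE -chiS_ux /chiS rmorph_sum horner_sum; apply/eqP/eq_bigr => s _.
  by rewrite /= map_polyXn hornerXn chi_expi ?prime_gt0.
have pq_gt0 : (0 < p * q)%N by rewrite muln_gt0 !prime_gt0.
have [c class_c] := class_sum_Cyclotomic_dvd p_pr q_pr pq_neq
  (Cyclotomic_dvd (expi_prim_root R pq_gt0) P_root).
exists c => t; pose N := (size P + p + \sum_(s in S) (chi_exp (u, x) s).+1)%N.
have e_lt_N s : s \in S -> (chi_exp (u, x) s < N)%N.
  by move=> s_S; rewrite /N (bigD1 s) //=; lia.
rewrite -(class_sum_chi_exp _ t p_pr q_pr pq_neq e_lt_N).
rewrite -(class_c N _ (ltn_Zp_prime p_pr (q%:R * t))) ?leq_addr // rmorph_sum.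
by congr class_sum; apply: eq_bigr => s _ /=; rewrite map_polyXn.
Qed.

Theorem proposition4p7 (R : realType) (p q : nat) (hp : prime p) (hq : prime q)
    (hpq : p != q) (S : {set G p q}) :
  (forall u : Z2 p, u != (0, 0) ->
     exists x_u : Z2 q, chiS R (u, x_u) S = 0) ->
  exists (c : nat) (D : {ffun Z2 p -> nat}),
    forall a : Z2 p, Sp S a = (c + q * D a)%N.
Proof.
move=> chiS_eq0.
have p_neq0 : p%:R != 0 :> 'F_q by rewrite -(dvdn_pcharf (pchar_Fp hq)) dvdn_prime2 // eq_sym.
have line_sums u : u != (0, 0) ->
    exists c : 'F_q, forall t, \sum_(a | dotZp u a == t) (Sp S a)%:R = c.
  by move=> /chiS_eq0[x]; exact: line_sums_Sp.
have Sp_const a b : (Sp S a %% q)%N = (Sp S b %% q)%N.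
  by have := congr1 val (line_sums_const hp p_neq0 line_sums a b); rewrite /= !val_Fp_nat.
pose a0 : Z2 p := (0, 0).
exists (Sp S a0 %% q)%N, [ffun a => (Sp S a %/ q)%N] => a.
by rewrite ffunE {1}(divn_eq (Sp S a) q) addnC mulnC (Sp_const a a0).
Qed.
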